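(* Let $B$ be a finite simplicial complex. Any consistent collection of small symmetric necklaces (with morphisms) over the simplices of the $3$-skeleton of $B$ extends uniquely to a consistent collection of small symmetric necklaces over all simplices of $B$. Equivalently, for every simplex $\Delta$ of dimension at least $4$, a consistent collection of necklaces over all proper faces of $\Delta$ is the collection of restrictions of a unique necklace over $\Delta$.
   Context: A necklace over a simplex $\sigma$ is a cyclic word whose beads are colored by the vertices of $\sigma$; for a face $\tau\subset\sigma$ the necklace of $\tau$ is obtained from that of $\sigma$ by deleting all beads whose colors are not vertices of $\tau$, which gives an injective color- and cyclic-order-preserving morphism; a collection of necklaces and morphisms is consistent if these morphisms compose correctly along chains of faces. A small symmetric necklace contains exactly two beads of each color and is invariant under rotation by half its length. *)

From mathcomp Require Import all_boot.
Set Implicit Arguments. Unset Strict Implicit. Unset Printing Implicit Defensive.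

(* Necklaces are represented concretely: a necklace is a word [s : seq V];
   its beads are the positions [i < size s], the color of bead i is
   [onth s i], and the cyclic order of beads is the cyclic order of Z/(size s). *)

Definition cyc3 (i j k : nat) : bool :=
  [|| (i < j < k), (j < k < i) | (k < i < j)].

Section Necklaces.
Variable V : finType.

Definition small_symmetric (S : {set V}) (s : seq V) : bool :=
  [forall v : V, count_mem v s == (if v \in S then 2 else 0)] &&
  (rot (size s %/ 2) s == s).

(* [f] is the morphism exhibiting [a] as the necklace obtained from [b] by
   deleting all beads whose colors are not in [T]: injective, color- and
   cyclic-order-preserving, with image exactly the beads of [b] colored in T *)
Definition restr_morph (T : {set V}) (a b : seq V) (f : nat -> nat) : Prop :=
  [/\ forall i j, i < size a -> j < size a -> f i = f j -> i = j,
      forall i, i < size a -> onth b (f i) = onth a i,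
      forall i j k, i < size a -> j < size a -> k < size a ->
        cyc3 i j k -> cyc3 (f i) (f j) (f k)
    & forall j c, onth b j = Some c ->
        (c \in T <-> exists2 i, i < size a & f i = j)].

Definition simplicial_complex (B : {set {set V}}) : Prop :=
  set0 \notin B /\
  (forall s t : {set V}, s \in B -> t \subset s -> t != set0 -> t \in B).

Definition consistent_collection (F : pred {set V})
    (N : {set V} -> seq V) (phi : {set V} -> {set V} -> nat -> nat) : Prop :=
  [/\ forall s, F s -> small_symmetric s (N s),
      forall t s, F t -> F s -> t \proper s -> restr_morph t (N t) (N s) (phi t s)
    & forall r t s, F r -> F t -> F s -> r \proper t -> t \proper s ->
        forall i, i < size (N r) -> phi t s (phi r t i) = phi r s i].

(* the 3-skeleton of B: simplices of dimension <= 3, i.e. at most 4 vertices *)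
Definition skel3 (B : {set {set V}}) : pred {set V} :=
  fun s => (s \in B) && (#|s| <= 4).

Definition extends_collection (B : {set {set V}})
    (N0 : {set V} -> seq V) (phi0 : {set V} -> {set V} -> nat -> nat)
    (N : {set V} -> seq V) (phi : {set V} -> {set V} -> nat -> nat) : Prop :=
  [/\ consistent_collection (mem B) N phi,
      forall s, skel3 B s -> N s = N0 s
    & forall t s, skel3 B t -> skel3 B s -> t \proper s ->
        forall i, i < size (N0 t) -> phi t s i = phi0 t s i].

(* two collections over B are isomorphic relative to the 3-skeleton:
   bead bijections (color- and cyclic-order-preserving) over every simplex,
   the identity on the 3-skeleton, commuting with all morphisms *)
Definition iso_rel_skel3 (B : {set {set V}})
    (N1 : {set V} -> seq V) (phi1 : {set V} -> {set V} -> nat -> nat)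
    (N2 : {set V} -> seq V) (phi2 : {set V} -> {set V} -> nat -> nat) : Prop :=
  exists psi : {set V} -> nat -> nat,
  [/\ forall s, s \in B -> restr_morph s (N1 s) (N2 s) (psi s),
      forall s, skel3 B s -> forall i, i < size (N1 s) -> psi s i = i
    & forall t s, t \in B -> s \in B -> t \proper s ->
        forall i, i < size (N1 t) -> psi s (phi1 t s i) = phi2 t s (psi t i)].

End Necklaces.

From mathcomp Require Import all_boot zify.
Set Implicit Arguments. Unset Strict Implicit. Unset Printing Implicit Defensive.

(* Give each bead of the necklace over a simplex s the label (v, e) when it is the image of
   bead e of the two-bead necklace [:: v; v] over the vertex v. The morphisms respect these
   labels, so a necklace over s amounts to a cyclic order on the labels with colors in s, and
   the cyclic order of three labels is read off the necklace over the face (of dimension at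
   most 2) spanned by their colors. Conversely, this ternary relation, computed from the
   3-skeleton alone, is a cyclic order on the labels of every simplex, because any four labels
   lie in a face of dimension at most 3 where the relation is realized by bead positions.
   Numbering the labels along it yields the necklace over s. The necklace is symmetric: the
   necklace over an edge {u, v} is u v u v, so the two beads of color v separate the two beads
   of every other color, and exactly #|s| - 1 beads lie strictly between the two v-beads. *)

(* The strict linear order obtained by cutting the cyclic order of [nat] open at [o]. *)
Definition cyc_from (o a b : nat) := (a == o) && (b != o) || cyc3 o a b.

Lemma cyc3_from o a b c :
  cyc3 a b c = [|| cyc_from o a b && cyc_from o b c, cyc_from o b c && cyc_from o c a
                | cyc_from o c a && cyc_from o a b].
Proof.
rewrite /cyc_from /cyc3.
by case: (ltngtP a b); case: (ltngtP b c); case: (ltngtP c a); case: (ltngtP o a) => /=; lia.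
Qed.

Section CyclicNumbering.
Variables (X : finType) (A : {set X}) (cyc : X -> X -> X -> bool).

Hypothesis cyc_local : forall a1 a2 a3 a4, a1 \in A -> a2 \in A -> a3 \in A -> a4 \in A ->
  exists2 p : X -> nat, {in [:: a1; a2; a3; a4] &, injective p} &
    {in [:: a1; a2; a3; a4] & &, forall u v w, cyc u v w = cyc3 (p u) (p v) (p w)}.

Variable b : X.
Hypothesis bA : b \in A.

Definition cyc_lt x y := (x == b) && (y != b) || cyc b x y.
Definition cyc_rank x := #|[set z in A | cyc_lt z x]|.

Lemma cyc_lt_local x y z : x \in A -> y \in A -> z \in A ->
  exists p : X -> nat, [/\ {in [:: b; x; y; z] &, injective p},
    {in [:: b; x; y; z] &, forall u v, cyc_lt u v = cyc_from (p b) (p u) (p v)} &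
    cyc x y z = cyc3 (p x) (p y) (p z)].
Proof.
move=> xA yA zA; have [p p_inj p_cyc] := cyc_local bA xA yA zA.
exists p; split => //; last by rewrite p_cyc ?inE ?eqxx ?orbT.
have bQ : b \in [:: b; x; y; z] by rewrite inE eqxx.
move=> u v uQ vQ; rewrite /cyc_lt /cyc_from p_cyc //.
by rewrite (inj_in_eq p_inj uQ bQ) (inj_in_eq p_inj vQ bQ).
Qed.

Lemma cyc_lt_irr x : x \in A -> cyc_lt x x = false.
Proof.
move=> xA; have [p [_ p_lt _]] := cyc_lt_local xA xA xA.
by rewrite p_lt ?inE ?eqxx ?orbT //; apply/negbTE; rewrite /cyc_from /cyc3; lia.
Qed.

Lemma cyc_lt_trans x y z : x \in A -> y \in A -> z \in A ->
  cyc_lt x y -> cyc_lt y z -> cyc_lt x z.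
Proof.
move=> xA yA zA; have [p [_ p_lt _]] := cyc_lt_local xA yA zA.
by rewrite !p_lt ?inE ?eqxx ?orbT //; rewrite /cyc_from /cyc3; lia.
Qed.

Lemma cyc_lt_total x y : x \in A -> y \in A -> x != y -> cyc_lt x y || cyc_lt y x.
Proof.
move=> xA yA nxy; have [p [p_inj p_lt _]] := cyc_lt_local xA yA yA.
have pxy : p x != p y by rewrite (inj_in_eq p_inj) ?inE ?eqxx ?orbT.
rewrite !p_lt ?inE ?eqxx ?orbT //; move: pxy; rewrite /cyc_from /cyc3; lia.
Qed.

Lemma cyc_rank_lt x y : x \in A -> y \in A -> cyc_lt x y -> cyc_rank x < cyc_rank y.
Proof.
move=> xA yA xy; apply: proper_card; apply/properP; split.
  apply/subsetP => z; rewrite !inE => /andP[zA zx]; rewrite zA.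
  exact: cyc_lt_trans zx xy.
by exists x; rewrite !inE xA ?xy ?cyc_lt_irr.
Qed.

Lemma cyc_rank_ltE x y : x \in A -> y \in A -> (cyc_rank x < cyc_rank y) = cyc_lt x y.
Proof.
move=> xA yA; apply/idP/idP => [lt_xy|]; last exact: cyc_rank_lt.
have nxy : x != y by apply: contraTneq lt_xy => ->; rewrite ltnn.
have /orP[//|yx] := cyc_lt_total xA yA nxy.
by have := cyc_rank_lt yA xA yx; rewrite ltnNge ltnW.
Qed.

Lemma cyc_rank_inj : {in A &, injective cyc_rank}.
Proof.
move=> x y xA yA Exy; apply/eqP; apply: contraT => nxy.
have := cyc_lt_total xA yA nxy.
by rewrite -!cyc_rank_ltE // Exy ltnn.
Qed.

Lemma cyc_rank_bound x : x \in A -> cyc_rank x < #|A|.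
Proof.
move=> xA; apply: proper_card; apply/properP; split.
  by apply/subsetP => z; rewrite inE => /andP[].
by exists x => //; rewrite inE xA cyc_lt_irr.
Qed.

Lemma cyc_rank_perm : perm_eq [seq cyc_rank x | x <- enum A] (iota 0 #|A|).
Proof.
have rank_uniq : uniq [seq cyc_rank x | x <- enum A].
  by rewrite map_inj_in_uniq ?enum_uniq // => x y; rewrite !mem_enum; apply: cyc_rank_inj.
have sub : {subset [seq cyc_rank x | x <- enum A] <= iota 0 #|A|}.
  by move=> i /mapP[x]; rewrite mem_enum mem_iota => xA ->; rewrite cyc_rank_bound.
have size_iota_rank : size (iota 0 #|A|) <= size [seq cyc_rank x | x <- enum A].
  by rewrite size_iota size_map -cardE.
have [_ rank_iota] := uniq_min_size rank_uniq sub size_iota_rank.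
exact: uniq_perm rank_uniq (iota_uniq _ _) rank_iota.
Qed.

Lemma cyc_rank_surj i : i < #|A| -> exists2 x, x \in A & cyc_rank x = i.
Proof.
move=> lt_i; have : i \in iota 0 #|A| by rewrite mem_iota.
rewrite -(perm_mem cyc_rank_perm) => /mapP[x].
by rewrite mem_enum => xA ->; exists x.
Qed.

Lemma cyc_rank_cyc x y z : x \in A -> y \in A -> z \in A ->
  cyc3 (cyc_rank x) (cyc_rank y) (cyc_rank z) = cyc x y z.
Proof.
move=> xA yA zA; have [p [_ p_lt ->]] := cyc_lt_local xA yA zA.
rewrite [RHS](cyc3_from (p b)) {1}/cyc3 !cyc_rank_ltE //.
by rewrite !p_lt ?inE ?eqxx ?orbT.
Qed.

Lemma cyc_rank_between x y : x \in A -> y \in A -> cyc_rank x < cyc_rank y ->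
  #|[set z in A | cyc x z y]| = cyc_rank y - cyc_rank x - 1.
Proof.
move=> xA yA lt_xy; set Sx := [set z in A | cyc_lt z x]; set Sy := [set z in A | cyc_lt z y].
have -> : [set z in A | cyc x z y] = Sy :\: Sx :\ x.
  apply/setP => z; rewrite !inE; case zA: (z \in A); rewrite ?andbF //=.
  rewrite -(inj_in_eq cyc_rank_inj zA xA) -cyc_rank_cyc // -!cyc_rank_ltE // /cyc3; lia.
have SxSy : Sx \subset Sy.
  apply/subsetP => w; rewrite !inE => /andP[wA wx]; rewrite wA.
  by apply: (cyc_lt_trans wA xA yA wx); rewrite -cyc_rank_ltE.
have x_in : x \in Sy :\: Sx by rewrite !inE xA cyc_lt_irr // -cyc_rank_ltE.
have := cardsD1 x (Sy :\: Sx); rewrite x_in cardsD (setIidPr SxSy) /cyc_rank -/Sx -/Sy; lia.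
Qed.

End CyclicNumbering.

Lemma small_symmetric1 (V : finType) (v : V) s : small_symmetric [set v] s -> s = [:: v; v].
Proof.
case/andP => /forallP count_s _.
have /all_pred1P s_nseq : all (pred1 v) s.
  apply/allP => x xs; apply: contraLR xs => /= xv; have := count_s x.
  by rewrite inE (negbTE xv) -has_pred1 has_count => /eqP ->.
have := count_s v; rewrite inE eqxx s_nseq count_nseq /= eqxx mul1n => /eqP size_s.
by rewrite s_nseq size_s.
Qed.

Lemma small_symmetric_mem (V : finType) (S : {set V}) s c :
  small_symmetric S s -> c \in s -> c \in S.
Proof.
case/andP => /forallP /(_ c) count_c _; apply: contraLR => cS.
by move: count_c; rewrite (negbTE cS) -has_pred1 has_count => /eqP ->.
Qed.

Lemma onth_size (T : Type) (s : seq T) i c : onth s i = Some c -> i < size s.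
Proof. by rewrite -onthTE => ->. Qed.

Lemma cyc3_morph_eq (f : nat -> nat) n :
  (forall i j, i < n -> j < n -> f i = f j -> i = j) ->
  (forall i j k, i < n -> j < n -> k < n -> cyc3 i j k -> cyc3 (f i) (f j) (f k)) ->
  forall i j k, i < n -> j < n -> k < n -> cyc3 (f i) (f j) (f k) = cyc3 i j k.
Proof.
move=> f_inj f_cyc i j k lt_i lt_j lt_k; apply/idP/idP => [fijk|]; last exact: f_cyc.
apply: contraT => ijk.
have neq u v : f u <> f v -> u <> v by move=> + uv; rewrite uv.
have [/neq nij /neq njk /neq nik] : [/\ f i <> f j, f j <> f k & f i <> f k].
  by move: fijk; rewrite /cyc3 => fijk; split; lia.
have : cyc3 i k j by move: ijk; rewrite /cyc3; lia.
by move/(f_cyc _ _ _ lt_i lt_k lt_j); move: fijk; rewrite /cyc3; lia.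
Qed.

Section BeadPositions.
Variables (V : finType) (F : pred {set V}).
Variables (N : {set V} -> seq V) (phi : {set V} -> {set V} -> nat -> nat).
Hypothesis N_phi : consistent_collection F N phi.
Hypothesis F_faces : forall s t : {set V}, F s -> t \subset s -> t != set0 -> F t.

Definition bead_pos (s : {set V}) (x : V * bool) : nat :=
  if [set x.1] == s then nat_of_bool x.2 else phi [set x.1] s x.2.

Lemma F_vertex s v : F s -> v \in s -> F [set v].
Proof. by move=> Fs vs; apply: (F_faces Fs); rewrite ?sub1set // -card_gt0 cards1. Qed.

Lemma N_vertex s v : F s -> v \in s -> N [set v] = [:: v; v].
Proof. by case: N_phi => N_sym _ _ Fs vs; apply/small_symmetric1/N_sym/(F_vertex Fs vs). Qed.

Lemma vertex_proper (s : {set V}) v : v \in s -> [set v] != s -> [set v] \proper s.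
Proof. by move=> vs ne; rewrite properEneq ne sub1set. Qed.

Lemma bead_pos_color s x : F s -> x.1 \in s -> onth (N s) (bead_pos s x) = Some x.1.
Proof.
move=> Fs xs; rewrite /bead_pos; case: eqP => [<-|/eqP ne].
  by rewrite (N_vertex Fs xs); case: x.2.
case: N_phi => _ N_morph _; case: (N_morph _ _ (F_vertex Fs xs) Fs (vertex_proper xs ne)).
by move=> _ col _ _; rewrite col (N_vertex Fs xs) //; case: x.2.
Qed.

Lemma bead_pos_lt s x : F s -> x.1 \in s -> bead_pos s x < size (N s).
Proof. by move=> Fs xs; apply: onth_size (bead_pos_color Fs xs). Qed.

Lemma bead_pos_inj s : F s -> {in [pred x | x.1 \in s] &, injective (bead_pos s)}.
Proof.
move=> Fs [v e] [w f]; rewrite !inE /= => vs ws E.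
have := bead_pos_color Fs (x := (v, e)) vs.
rewrite E (bead_pos_color Fs (x := (w, f))) // => -[wv]; subst w; move: E; rewrite /bead_pos /=.
case: eqP => [_ /= | /eqP ne]; first by case: e f => [] [].
case: N_phi => _ N_morph _; case: (N_morph _ _ (F_vertex Fs vs) Fs (vertex_proper vs ne)).
move=> phi_inj _ _ _ /phi_inj; rewrite (N_vertex Fs vs) => ef.
by case: e f ef => [] [] // /(_ isT isT).
Qed.

Lemma bead_pos_surj s i : F s -> i < size (N s) -> exists2 x, x.1 \in s & bead_pos s x = i.
Proof.
move=> Fs lt_i; have [c sic] : exists c, onth (N s) i = Some c.
  by move: lt_i; rewrite -onthTE; case: onth => // c; exists c.
have cs : c \in s.
  by case: N_phi => N_sym _ _; apply: (small_symmetric_mem (N_sym _ Fs)); apply/onthP; exists i.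
rewrite /bead_pos; case: (eqVneq [set c] s) => [E|ne].
  move: lt_i; rewrite -E (N_vertex Fs cs) => lt_i.
  by exists (c, i == 1); rewrite /= ?eqxx ?inE //; case: i lt_i {sic} => [|[|]].
case: N_phi => _ N_morph _; case: (N_morph _ _ (F_vertex Fs cs) Fs (vertex_proper cs ne)).
move=> _ _ _ /(_ i c sic) [/(_ (set11 c))[k]]; rewrite (N_vertex Fs cs) => lt_k <- _.
by exists (c, k == 1) => //=; rewrite (negbTE ne); case: k lt_k => [|[|]].
Qed.

Lemma phi_bead_pos t s x : F t -> F s -> t \proper s -> x.1 \in t ->
  phi t s (bead_pos t x) = bead_pos s x.
Proof.
move=> Ft Fs ts xt; have xs : x.1 \in s by apply: subsetP (proper_sub ts) _ xt.
have ns : [set x.1] != s.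
  by apply: contraTneq ts => <-; rewrite properE sub1set xt andbF.
rewrite /bead_pos (negbTE ns); case: eqP => [-> //|/eqP ne].
case: N_phi => _ _ phi_comp; rewrite phi_comp ?(F_vertex Ft xt) ?vertex_proper //.
by rewrite (N_vertex Ft xt); case: x.2.
Qed.

Lemma cyc3_bead_pos r s x y z : F r -> F s -> r \subset s ->
  x.1 \in r -> y.1 \in r -> z.1 \in r ->
  cyc3 (bead_pos s x) (bead_pos s y) (bead_pos s z) =
  cyc3 (bead_pos r x) (bead_pos r y) (bead_pos r z).
Proof.
move=> Fr Fs rs xr yr zr; have [<- //|ne] := eqVneq r s.
have prs : r \proper s by rewrite properEneq ne rs.
rewrite -!(phi_bead_pos Fr Fs prs) //.
case: N_phi => _ /(_ _ _ Fr Fs prs)[phi_inj _ phi_cyc _] _.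
by apply: (cyc3_morph_eq (n := size (N r))) => //; apply: bead_pos_lt.
Qed.

End BeadPositions.

Section Realization.
Variables (V : finType) (cyc : V * bool -> V * bool -> V * bool -> bool) (d : V * bool).

Definition realizes (s : {set V}) (L : seq V) (p : V * bool -> nat) : Prop :=
  [/\ small_symmetric s L,
      forall x, x.1 \in s -> onth L (p x) = Some x.1,
      {in [pred x | x.1 \in s] &, injective p},
      forall i, i < size L -> exists2 x, x.1 \in s & p x = i
    & forall x y z, x.1 \in s -> y.1 \in s -> z.1 \in s -> cyc3 (p x) (p y) (p z) = cyc x y z].

Definition bead_at (p : V * bool -> nat) (s : {set V}) (i : nat) : V * bool :=
  odflt d [pick x | (x.1 \in s) && (p x == i)].

Lemma bead_atP p (s : {set V}) n i : (forall i, i < n -> exists2 x, x.1 \in s & p x = i) ->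
  i < n -> (bead_at p s i).1 \in s /\ p (bead_at p s i) = i.
Proof.
move=> p_onto lt_i; rewrite /bead_at; case: pickP => [x /andP[? /eqP] //|none].
by have [x xs xi] := p_onto i lt_i; have := none x; rewrite xs xi eqxx.
Qed.

Lemma bead_at_pos p (s : {set V}) x : {in [pred x | x.1 \in s] &, injective p} ->
  x.1 \in s -> bead_at p s (p x) = x.
Proof.
move=> p_inj xs; rewrite /bead_at; case: pickP => [y /andP[ys /eqP]|none].
  exact: p_inj.
by have := none x; rewrite xs eqxx.
Qed.

Lemma realizes_lt s L p x : realizes s L p -> x.1 \in s -> p x < size L.
Proof. by case=> _ p_col _ _ _ xs; apply: onth_size (p_col x xs). Qed.

Lemma realizes_morph s L p t Lt pt : realizes s L p -> realizes t Lt pt -> t \subset s ->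
  restr_morph t Lt L (fun i => p (bead_at pt t i)).
Proof.
move=> p_L pt_Lt ts; have tsub x : x.1 \in t -> x.1 \in s by apply: subsetP.
have pt_lt := realizes_lt pt_Lt.
case: pt_Lt p_L => _ pt_col pt_inj pt_onto pt_cyc [_ p_col p_inj p_onto p_cyc].
have pt_at := bead_atP pt_onto; have pt_pos := bead_at_pos pt_inj.
split.
- move=> i j /pt_at[it pi] /pt_at[jt pj] E.
  by rewrite -pi -pj (p_inj _ _ _ _ E) // inE tsub.
- by move=> i /pt_at[it pi]; rewrite p_col ?tsub // -[in RHS]pi pt_col.
- move=> i j k /pt_at[it pi] /pt_at[jt pj] /pt_at[kt pk].
  by rewrite p_cyc ?tsub // -pt_cyc // pi pj pk.
- move=> j c jc; have [x xs xj] := p_onto j (onth_size jc).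
  move: jc; rewrite -xj p_col // => -[<-]; split => [xt | [i /pt_at[it pi] /p_inj]].
    by exists (pt x); rewrite ?pt_lt ?pt_pos.
  by rewrite !inE tsub // => /(_ isT xs) <-.
Qed.

End Realization.

Lemma small_symmetric_edge (V : finType) (u v : V) L :
  u != v -> small_symmetric [set u; v] L -> exists a b, L = [:: a; b; a; b].
Proof.
move=> uv /[dup] L_sym /andP[/forallP count_L /eqP rot_L].
have size_L : size L = 4.
  rewrite -(count_predC (pred1 u)) [X in _ + X](@eq_in_count _ _ (pred1 v)); last first.
    move=> x /(small_symmetric_mem L_sym); rewrite !inE /=.
    by case/orP => /eqP ->; rewrite eqxx ?(negbTE uv) // eq_sym uv.
  by have := count_L u; have := count_L v; rewrite !inE !eqxx orbT => /eqP -> /eqP ->.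
move: rot_L; rewrite size_L.
by clear L_sym count_L; case: L size_L => [|a [|b [|a' [|b' []]]]] //= _ [-> ->]; exists a, b.
Qed.

Lemma alternating4_separates (T : eqType) (a b x0 : T) p q i j :
  let L := [:: a; b; a; b] in
  p < 4 -> q < 4 -> i < 4 -> j < 4 -> p != q -> i != j ->
  nth x0 L p = nth x0 L q -> nth x0 L i = nth x0 L j -> nth x0 L p != nth x0 L i ->
  cyc3 p i q = ~~ cyc3 p j q.
Proof.
move=> L; case: p => [|[|[|[|p]]]]; case: q => [|[|[|[|q]]]]; case: i => [|[|[|[|i]]]];
  case: j => [|[|[|[|j]]]] //= _ _ _ _ _ _ Epq Eij; rewrite ?Epq ?Eij ?eqxx //.
Qed.

Lemma count_enum_set (T : finType) (A : {set T}) (P : pred T) :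
  count P (enum A) = #|[set x in A | P x]|.
Proof.
rewrite setIdE cardE (perm_size (enum_setI _ _)) size_filter.
by apply: eq_count => x; rewrite inE.
Qed.

Lemma rot_mkseq_half (T : Type) (f : nat -> T) n :
  (forall i, i < n -> f (n + i) = f i) -> rot n (mkseq f (n * 2)) = mkseq f (n * 2).
Proof.
move=> f_half; have shift : map f (iota n n) = mkseq f n.
  have -> : iota n n = map (addn n) (iota 0 n) by rewrite -iotaDl addn0.
  rewrite /mkseq -map_comp.
  by apply/eq_in_map => i; rewrite mem_iota /= => /f_half.
rewrite muln2 -addnn /mkseq iotaD map_cat add0n shift.
by rewrite -{1}(size_mkseq f n) rot_size_cat.
Qed.

Definition beads (V : finType) (s : {set V}) : {set V * bool} := [set x | x.1 \in s].

Lemma card_beads (V : finType) (s : {set V}) : #|beads s| = #|s| * 2.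
Proof.
have -> : beads s = setX s [set: bool] by apply/setP => -[v e]; rewrite !inE andbT.
by rewrite cardsX cardsT card_bool.
Qed.

Section Extension.
Variables (V : finType) (B : {set {set V}}).
Hypothesis B_complex : simplicial_complex B.
Variables (N0 : {set V} -> seq V) (phi0 : {set V} -> {set V} -> nat -> nat).
Hypothesis N0_phi0 : consistent_collection (skel3 B) N0 phi0.

Lemma complex_faces (s t : {set V}) : s \in B -> t \subset s -> t != set0 -> t \in B.
Proof. exact: (proj2 B_complex). Qed.

Lemma skel3_faces (s t : {set V}) : skel3 B s -> t \subset s -> t != set0 -> skel3 B t.
Proof.
case/andP => sB s4 ts t0; rewrite /skel3 (complex_faces sB ts t0).
exact: leq_trans (subset_leq_card ts) s4.
Qed.

Lemma skel3_span (s : {set V}) (cs : seq V) : s \in B -> {subset cs <= s} ->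
  0 < size cs <= 4 -> skel3 B [set v in cs].
Proof.
case: cs => // c cs sB cs_s /andP[_ size_cs]; apply/andP; split.
  apply: (complex_faces sB); first by apply/subsetP => v; rewrite inE; apply: cs_s.
  by apply/set0Pn; exists c; rewrite !inE eqxx.
by rewrite cardsE; apply: leq_trans (card_size _) size_cs.
Qed.

Lemma N0_small_symmetric s : skel3 B s -> small_symmetric s (N0 s).
Proof. by case: N0_phi0 => N0_sym _ _; apply: N0_sym. Qed.

Definition bead_cyc (x y z : V * bool) : bool :=
  let r := [set v in [:: x.1; y.1; z.1]] in
  cyc3 (bead_pos phi0 r x) (bead_pos phi0 r y) (bead_pos phi0 r z).

Lemma bead_cyc_at s x y z : skel3 B s -> x.1 \in s -> y.1 \in s -> z.1 \in s ->
  bead_cyc x y z = cyc3 (bead_pos phi0 s x) (bead_pos phi0 s y) (bead_pos phi0 s z).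
Proof.
move=> Fs xs ys zs; set r := [set v in [:: x.1; y.1; z.1]].
have sub : r \subset s by apply/subsetP => v; rewrite !inE => /or3P[] /eqP ->.
have Fr : skel3 B r.
  by apply: skel3_span (proj1 (andP Fs)) _ _ => // v; rewrite !inE => /or3P[] /eqP ->.
by rewrite (cyc3_bead_pos N0_phi0 skel3_faces Fr Fs sub) // !inE eqxx ?orbT.
Qed.

Lemma bead_cyc_local s : s \in B ->
  forall a1 a2 a3 a4, a1 \in beads s -> a2 \in beads s -> a3 \in beads s -> a4 \in beads s ->
  exists2 p : V * bool -> nat, {in [:: a1; a2; a3; a4] &, injective p} &
    {in [:: a1; a2; a3; a4] & &, forall u v w, bead_cyc u v w = cyc3 (p u) (p v) (p w)}.
Proof.
move=> sB a1 a2 a3 a4; rewrite !inE => a1s a2s a3s a4s.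
set Q := [:: a1; a2; a3; a4]; set r := [set v in [seq x.1 | x <- Q]].
have Fr : skel3 B r.
  apply: skel3_span sB _ _ => // c /mapP[x xQ ->]; move: xQ; rewrite !inE.
  by case/or4P => /eqP ->.
have Qr x : x \in Q -> x.1 \in r by move=> xQ; rewrite inE map_f.
exists (bead_pos phi0 r).
  by move=> x y /Qr xr /Qr yr; apply: (bead_pos_inj N0_phi0 skel3_faces Fr).
by move=> x y z /Qr xr /Qr yr /Qr zr; apply: bead_cyc_at.
Qed.

Lemma bead_cyc_edge s v u e : s \in B -> v \in s -> u \in s -> v != u ->
  bead_cyc (v, e) (u, false) (v, ~~ e) = ~~ bead_cyc (v, e) (u, true) (v, ~~ e).
Proof.
move=> sB vs us vu; set r := [set v; u].
have Fr : skel3 B r.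
  have -> : r = [set w in [:: v; u]] by apply/setP => w; rewrite !inE.
  by apply: skel3_span sB _ _ => // w; rewrite !inE => /orP[] /eqP ->.
have [a [b N0_r]] := small_symmetric_edge vu (N0_small_symmetric Fr).
set P := bead_pos phi0 r.
have color x : x.1 \in r -> nth v [:: a; b; a; b] (P x) = x.1.
  by move=> xr; rewrite -N0_r; apply/onth_nth/(bead_pos_color N0_phi0 skel3_faces Fr xr).
have lt4 x : x.1 \in r -> P x < 4.
  move=> xr; rewrite -[4]/(size [:: a; b; a; b]) -N0_r.
  exact: (bead_pos_lt N0_phi0 skel3_faces Fr xr).
have neqP x y : x.1 \in r -> y.1 \in r -> x != y -> P x != P y.
  by move=> xr yr; apply: contra_neq => /(bead_pos_inj N0_phi0 skel3_faces Fr xr yr).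
have vr : v \in r by rewrite !inE eqxx.
have ur : u \in r by rewrite !inE eqxx orbT.
rewrite !(bead_cyc_at Fr) //; apply: (@alternating4_separates _ a b v);
  rewrite ?lt4 ?neqP ?color ?xpair_eqE ?eqxx //; by case: e.
Qed.

Variable d : V * bool.

Definition base (s : {set V}) : V * bool := odflt d [pick x in beads s].
Definition bead_rank (s : {set V}) : V * bool -> nat := cyc_rank (beads s) bead_cyc (base s).

Definition necklace (s : {set V}) : seq V :=
  mkseq (fun i => (bead_at d (bead_rank s) s i).1) (#|s| * 2).

Section Simplex.
Variable s : {set V}.
Hypothesis sB : s \in B.

Lemma base_beads : base s \in beads s.
Proof.
rewrite /base; case: pickP => [x //|none].
have /set0Pn[v vs] : s != set0 by apply: contraNneq (proj1 B_complex) => <-.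
by have := none (v, false); rewrite inE vs.
Qed.

Let local := bead_cyc_local sB.

Lemma bead_rank_inj : {in [pred x | x.1 \in s] &, injective (bead_rank s)}.
Proof. by move=> x y xs ys; apply: (cyc_rank_inj local base_beads); rewrite inE. Qed.

Lemma bead_rank_surj i : i < #|s| * 2 -> exists2 x, x.1 \in s & bead_rank s x = i.
Proof.
by rewrite -card_beads => /(cyc_rank_surj local base_beads)[x]; rewrite inE; exists x.
Qed.

Lemma bead_rank_lt x : x.1 \in s -> bead_rank s x < #|s| * 2.
Proof. by move=> xs; rewrite -card_beads (cyc_rank_bound local base_beads) ?inE. Qed.

Lemma bead_rank_cyc x y z : x.1 \in s -> y.1 \in s -> z.1 \in s ->
  cyc3 (bead_rank s x) (bead_rank s y) (bead_rank s z) = bead_cyc x y z.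
Proof. by move=> xs ys zs; rewrite (cyc_rank_cyc local base_beads) ?inE. Qed.

Lemma bead_cyc_xxy x y : x.1 \in s -> y.1 \in s -> bead_cyc x x y = false.
Proof. by move=> xs ys; rewrite -bead_rank_cyc // /cyc3; lia. Qed.

Lemma bead_cyc_xyy x y : x.1 \in s -> y.1 \in s -> bead_cyc x y y = false.
Proof. by move=> xs ys; rewrite -bead_rank_cyc // /cyc3; lia. Qed.

Lemma antipodes_between v e : v \in s ->
  #|[set z in beads s | bead_cyc (v, e) z (v, ~~ e)]| = #|s| - 1.
Proof.
move=> vs; set Z := [set z in beads s | _].
have Z_color z : z \in Z -> z.1 \in s /\ z.1 != v.
  rewrite !inE => /andP[zs zZ]; split => //; apply: contraTneq zZ => zv.
  suff [->|->] : z = (v, e) \/ z = (v, ~~ e) by rewrite ?bead_cyc_xxy ?bead_cyc_xyy.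
  case: z zv {zs} => w f /= ->; have [->|fe] := eqVneq f e; [by left | right].
  by move: fe; case: f; case: (e).
have fst_inj : {in Z &, injective fst}.
  move=> [w f] [w' f'] zZ zZ' /= ww'; subst w'; have [/= ws wv] := Z_color _ zZ.
  rewrite eq_sym in wv; have := bead_cyc_edge e sB vs ws wv.
  move: zZ zZ'; rewrite !inE /= ws /=.
  by case: f f' => [] [] // h h'; rewrite h h'.
rewrite -(card_in_imset fst_inj).
have -> : fst @: Z = s :\ v.
  apply/setP => w; rewrite !inE; apply/imsetP/andP => [[z zZ ->]|[wv ws]].
    by have [? ?] := Z_color _ zZ; split.
  rewrite eq_sym in wv.
  have [between|] := boolP (bead_cyc (v, e) (w, false) (v, ~~ e)).
    by exists (w, false); rewrite // !inE ws.
  by rewrite (bead_cyc_edge e sB vs ws wv) negbK => between; exists (w, true); rewrite // !inE ws.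
by have := cardsD1 v s; rewrite vs; lia.
Qed.

Lemma bead_rank_antipode v e : v \in s -> bead_rank s (v, e) < bead_rank s (v, ~~ e) ->
  bead_rank s (v, ~~ e) = bead_rank s (v, e) + #|s|.
Proof.
move=> vs lt_e; have s_gt0 : 0 < #|s| by apply/card_gt0P; exists v.
have := antipodes_between e vs.
by rewrite /bead_rank in lt_e *; rewrite (cyc_rank_between local base_beads) ?inE //; lia.
Qed.

Lemma bead_rank_antipodal v e : v \in s ->
  bead_rank s (v, ~~ e) = bead_rank s (v, e) + #|s| \/
  bead_rank s (v, e) = bead_rank s (v, ~~ e) + #|s|.
Proof.
move=> vs; case: (ltngtP (bead_rank s (v, e)) (bead_rank s (v, ~~ e))) => [lt_e|lt_ne|eq_e].
- by left; apply: bead_rank_antipode.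
- by right; have := bead_rank_antipode (e := ~~ e) vs; rewrite negbK; apply.
- by have := bead_rank_inj (x := (v, e)) (y := (v, ~~ e)) vs vs eq_e; case; case: (e).
Qed.

Lemma necklace_small_symmetric : small_symmetric s (necklace s).
Proof.
have label_spec := bead_atP d bead_rank_surj.
have label_rank := bead_at_pos d bead_rank_inj.
set n := #|s| in label_spec *.
set label := bead_at d (bead_rank s) s in label_spec label_rank *.
have labels_perm : perm_eq [seq label i | i <- iota 0 (n * 2)] (enum (beads s)).
  apply: uniq_perm; rewrite ?enum_uniq //.
    rewrite map_inj_in_uniq ?iota_uniq // => i j; rewrite !mem_iota /= => lt_i lt_j E.
    by rewrite -(label_spec i lt_i).2 E (label_spec j lt_j).2.
  move=> x; rewrite mem_enum inE; apply/mapP/idP => [[i] | xs].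
    by rewrite mem_iota => /andP[_ lt_i] ->; apply: (label_spec i lt_i).1.
  by exists (bead_rank s x); rewrite ?label_rank // mem_iota bead_rank_lt.
apply/andP; split.
  apply/forallP => w; rewrite /necklace -/label /mkseq (map_comp fst label) count_map.
  rewrite (permP labels_perm) count_enum_set.
  have [ws|ws] := boolP (w \in s).
    have -> : [set x in beads s | preim fst (pred1 w) x] = [set (w, false); (w, true)].
      apply/setP => -[u f]; rewrite !inE /= !xpair_eqE.
      by case: (eqVneq u w) => [->|_]; rewrite ?ws ?andbF //; case: f.
    by rewrite cards2 xpair_eqE eqxx.
  rewrite cards_eq0; apply/eqP/setP => -[u f].
  by rewrite !inE; case: (eqVneq u w) => [->|]; rewrite ?(negbTE ws) ?andbF.
rewrite /necklace size_mkseq mulnK //; apply/eqP/rot_mkseq_half => i lt_i.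
have [xs x_i] := label_spec i (leq_trans lt_i (leq_pmulr n (isT : 0 < 2))).
have := bead_rank_antipodal (label i).2 xs; rewrite -surjective_pairing x_i => -[x'_i|]; last lia.
by rewrite addnC -x'_i -/label label_rank.
Qed.

End Simplex.

Lemma necklace_realizes s : s \in B -> realizes bead_cyc s (necklace s) (bead_rank s).
Proof.
move=> sB; split.
- exact: necklace_small_symmetric.
- move=> x xs; have lt_x := bead_rank_lt sB xs.
  rewrite onthE (nth_map d.1) ?size_mkseq // nth_mkseq //.
  by rewrite (bead_at_pos d (bead_rank_inj sB) xs).
- exact: bead_rank_inj.
- by move=> i; rewrite size_mkseq; apply: bead_rank_surj.
- exact: bead_rank_cyc.
Qed.

Lemma N0_realizes s : skel3 B s -> realizes bead_cyc s (N0 s) (bead_pos phi0 s).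
Proof.
move=> Fs; split.
- exact: N0_small_symmetric.
- by move=> x; apply: (bead_pos_color N0_phi0 skel3_faces Fs).
- exact: (bead_pos_inj N0_phi0 skel3_faces Fs).
- by move=> i; apply: (bead_pos_surj N0_phi0 skel3_faces Fs).
- by move=> x y z xs ys zs; rewrite (bead_cyc_at Fs).
Qed.

Definition ext_necklace (s : {set V}) : seq V := if #|s| <= 4 then N0 s else necklace s.
Definition ext_pos (s : {set V}) : V * bool -> nat :=
  if #|s| <= 4 then bead_pos phi0 s else bead_rank s.
Definition ext_phi (t s : {set V}) (i : nat) : nat := ext_pos s (bead_at d (ext_pos t) t i).

Lemma ext_realizes s : s \in B -> realizes bead_cyc s (ext_necklace s) (ext_pos s).
Proof.
move=> sB; rewrite /ext_necklace /ext_pos; case: ifP => s4.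
  by apply: N0_realizes; rewrite /skel3 sB s4.
exact: necklace_realizes.
Qed.

Lemma extension_exists : extends_collection B N0 phi0 ext_necklace ext_phi.
Proof.
split; first split.
- by move=> s /ext_realizes[].
- move=> t s tB sB ts.
  exact: realizes_morph (ext_realizes sB) (ext_realizes tB) (proper_sub ts).
- move=> r t s rB tB sB rt _ i lt_i.
  have [_ _ _ r_onto _] := ext_realizes rB; have [_ _ t_inj _ _] := ext_realizes tB.
  have [ir _] := bead_atP d r_onto lt_i.
  by rewrite /ext_phi (bead_at_pos d t_inj) // (subsetP (proper_sub rt)).
- by move=> s /andP[_ s4]; rewrite /ext_necklace s4.
- move=> t s /[dup] Ft /andP[_ t4] /[dup] Fs /andP[_ s4] ts i lt_i.
  have [_ _ _ t_onto _] := N0_realizes Ft; have [xt xi] := bead_atP d t_onto lt_i.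
  rewrite /ext_phi /ext_pos t4 s4; set x := bead_at d _ t i in xt xi *.
  by rewrite -xi (phi_bead_pos N0_phi0 skel3_faces Ft Fs ts xt).
Qed.

Section Uniqueness.
Variables (N1 : {set V} -> seq V) (phi1 : {set V} -> {set V} -> nat -> nat).
Hypothesis N1_phi1_ext : extends_collection B N0 phi0 N1 phi1.

Lemma extension_bead_pos r x : skel3 B r -> x.1 \in r -> bead_pos phi1 r x = bead_pos phi0 r x.
Proof.
case: N1_phi1_ext => _ _ phi1_phi0 Fr xr; rewrite /bead_pos; case: eqP => // /eqP ne.
apply: phi1_phi0; rewrite ?vertex_proper //; first exact: (F_vertex skel3_faces Fr xr).
by rewrite (N_vertex N0_phi0 skel3_faces Fr xr); case: x.2.
Qed.

Lemma extension_realizes s : s \in B -> realizes bead_cyc s (N1 s) (bead_pos phi1 s).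
Proof.
case: N1_phi1_ext => N1_phi1 _ _ sB; split.
- by case: N1_phi1 => N1_sym _ _; apply: N1_sym.
- by move=> x; apply: (bead_pos_color N1_phi1 complex_faces sB).
- exact: (bead_pos_inj N1_phi1 complex_faces sB).
- by move=> i; apply: (bead_pos_surj N1_phi1 complex_faces sB).
move=> x y z xs ys zs; set r := [set v in [:: x.1; y.1; z.1]].
have sub : r \subset s by apply/subsetP => v; rewrite !inE => /or3P[] /eqP ->.
have Fr : skel3 B r by apply: skel3_span sB _ _ => // v; rewrite !inE => /or3P[] /eqP ->.
have rB : r \in B by case/andP: Fr.
have [xr yr zr] : [/\ x.1 \in r, y.1 \in r & z.1 \in r] by rewrite !inE !eqxx !orbT.
by rewrite (cyc3_bead_pos N1_phi1 complex_faces rB sB sub) // !extension_bead_pos.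
Qed.

End Uniqueness.

Lemma extension_unique N1 phi1 N2 phi2 :
  extends_collection B N0 phi0 N1 phi1 -> extends_collection B N0 phi0 N2 phi2 ->
  iso_rel_skel3 B N1 phi1 N2 phi2.
Proof.
move=> ext1 ext2; have real1 := extension_realizes ext1; have real2 := extension_realizes ext2.
have [[N1_phi1 _ _] [N2_phi2 _ _]] := (ext1, ext2).
exists (fun s i => bead_pos phi2 s (bead_at d (bead_pos phi1 s) s i)); split.
- by move=> s sB; apply: realizes_morph (real2 s sB) (real1 s sB) (subxx s).
- move=> s /[dup] Fs /andP[sB _] i lt_i; have [_ _ _ onto1 _] := real1 s sB.
  have [xs xi] := bead_atP d onto1 lt_i; set x := bead_at d _ s i in xs xi *.
  by rewrite -[RHS]xi (extension_bead_pos ext1 Fs xs) (extension_bead_pos ext2 Fs xs).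
- move=> t s tB sB ts i lt_i; have [_ _ _ onto1 _] := real1 t tB.
  have [_ _ inj1 _ _] := real1 s sB.
  have [xt xi] := bead_atP d onto1 lt_i; set x := bead_at d _ t i in xt xi *.
  have xs : x.1 \in s by apply: subsetP (proper_sub ts) _ xt.
  rewrite -xi (phi_bead_pos N1_phi1 complex_faces tB sB ts xt) (bead_at_pos d inj1 xs).
  by rewrite (phi_bead_pos N2_phi2 complex_faces tB sB ts xt).
Qed.

End Extension.

Theorem mainTheorem12 (V : finType) (B : {set {set V}}) :
  simplicial_complex B ->
  forall (N0 : {set V} -> seq V) (phi0 : {set V} -> {set V} -> nat -> nat),
    consistent_collection (skel3 B) N0 phi0 ->
    (exists N phi, extends_collection B N0 phi0 N phi) /\
    (forall N1 phi1 N2 phi2,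
        extends_collection B N0 phi0 N1 phi1 ->
        extends_collection B N0 phi0 N2 phi2 ->
        iso_rel_skel3 B N1 phi1 N2 phi2).
Proof.
move=> B_complex N0 phi0 N0_phi0.
(* A simplex of [B] supplies the default bead needed by the construction; for empty [B]
   every condition is vacuous. *)
have [B0 | [s0 s0B]] := set_0Vmem B.
  have noB s : s \in B -> False by rewrite B0 inE.
  have noF s : skel3 B s -> False by case/andP => /noB.
  split=> [|N1 phi1 N2 phi2 _ _];
    [exists N0, phi0; split; first split | exists (fun _ i => i); split];
    first [move=> ? /noF [] | move=> ? /noB [] | move=> ? ? /noF [] | move=> ? ? /noB []
          | move=> ? ? ? /noB []].
have /set0Pn[v _] : s0 != set0 by apply: contraNneq (proj1 B_complex) => <-.
split; first by do 2 eexists; apply: (extension_exists B_complex N0_phi0 (v, false)).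
by move=> N1 phi1 N2 phi2; apply: (extension_unique B_complex N0_phi0 (v, false)).
Qed.
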